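(* Let $\Omega$ be a finite set with $n$ elements, let $G \le \mathrm{Sym}(\Omega)$ be $t$-transitive with $t \geq 2$, let $u \in G$, $m = |\mathrm{supp}(u)|$, $\Delta \subseteq \mathrm{supp}(u)$, and $E = \{g^{-1} u g \mid g \in G_{(\Delta)}\}$. Then: (i) If $|\Delta| \le t-1$, then for every $\gamma \in \Omega \setminus \Delta$, $$|\{x \in E \mid \gamma^x = \gamma\}| = |E| \frac{n -m}{n-|\Delta|},\qquad |\{x \in E \mid \gamma^x \ne \gamma\}| = |E| \frac{m-|\Delta|}{n-|\Delta|}.$$ (ii) If $|\Delta| \le t-2$, then for all $\gamma, \delta \in \Omega \setminus \Delta$ with $\gamma \ne \delta$, $$|\{x \in E \mid \gamma \in \mathrm{fix}(x), \delta \in \mathrm{supp}(x)\}| = |E| \frac{(n-m)(m-|\Delta|)}{(n-|\Delta|)(n- |\Delta|-1)}.$$ (iii) If $|\Delta|=1$, then for all $\gamma \in \Omega \setminus \Delta$, $$|\{x \in E \mid \gamma^x \in \Delta \}| = |E| \frac{1}{n-1}.$$ (iv) If $|\Delta|=1$ and $t \ge 3$, then for all $\gamma, \delta \in \Omega \setminus \Delta$ with $\gamma \ne \delta$, $$|\{x\in E \mid \gamma^x = \delta\}| = |E|\frac{m-2}{(n-1)(n-2)}.$$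
   Context: Permutations act on the right, $\alpha\mapsto\alpha^x$. For $x\in\mathrm{Sym}(\Omega)$, $\mathrm{supp}(x)=\{\alpha\mid\alpha^x\ne\alpha\}$ and $\mathrm{fix}(x)=\{\alpha\mid\alpha^x=\alpha\}$. $G$ is $t$-transitive if it acts transitively on the set of ordered $t$-tuples of distinct points of $\Omega$. $G_{(\Delta)}$ denotes the pointwise stabilizer of $\Delta$ in $G$. *)

From mathcomp Require Import all_boot all_order all_algebra all_fingroup all_solvable primitive_action.
Set Implicit Arguments. Unset Strict Implicit. Unset Printing Implicit Defensive.

(* Permutations of a finite type T act on the right: alpha^x = x alpha, and
   (x * y) alpha = y (x alpha) in mathcomp, matching the paper. *)

Definition supp (T : finType) (x : {perm T}) : {set T} := [set a | x a != a].

Definition fixp (T : finType) (x : {perm T}) : {set T} := [set a | x a == a].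

From mathcomp Require Import all_boot all_order all_algebra all_fingroup all_solvable primitive_action.
From mathcomp Require Import zify.

(* E is the orbit of u under conjugation by H = G_(Delta), so H permutes E; by
   t-transitivity of G, H is transitive on the points outside Delta when
   |Delta| < t, and on the ordered pairs of distinct such points when
   |Delta| + 2 <= t.  For an H-invariant incidence between E and these points
   (pairs), double counting shows that the number of x in E incident to a
   given point (pair) is |E| times the number of points (pairs) incident to
   one x, divided by the number of points (pairs).  That last count depends
   only on supp x, which has m elements and contains Delta. *)

Set Implicit Arguments.
Unset Strict Implicit.
Unset Printing Implicit Defensive.

Import GRing.Theory Num.Theory.

Lemma sum_card_incidence (X Y : finType) (E : {set X}) (S : {set Y})
    (P : X -> Y -> bool) :
  \sum_(a in S) #|[set x in E | P x a]| = \sum_(x in E) #|[set a in S | P x a]|.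
Proof.
under eq_bigr do rewrite -sum1dep_card big_mkcondr.
rewrite exchange_big; apply: eq_bigr => x _.
by rewrite -sum1dep_card big_mkcondr.
Qed.

Section TransitiveDoubleCounting.

Variables (aT : finGroupType) (X Y : finType).
Variables (toX : {action aT &-> X}) (toY : {action aT &-> Y}).
Variables (H : {set aT}) (E : {set X}) (S : {set Y}) (P : X -> Y -> bool).
Hypotheses (actsE : [acts H, on E | toX])
  (P_act : forall x a h, h \in H -> P x a -> P (toX x h) (toY a h))
  (transS : {in S &, forall a b, exists2 h, h \in H & b = toY a h}).

Lemma card_incidence_le a b : a \in S -> b \in S ->
  #|[set x in E | P x a]| <= #|[set x in E | P x b]|.
Proof.
move=> Sa Sb; have [h Hh ->] := transS Sa Sb.
rewrite -(card_imset _ (act_inj toX h)); apply/subset_leq_card/subsetP => y.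
case/imsetP=> x; rewrite inE => /andP[Ex Pxa] ->.
by rewrite inE (acts_act actsE Hh) Ex P_act.
Qed.

Lemma card_incidence_transitive c a :
    (forall x, x \in E -> #|[set b in S | P x b]| = c) -> a \in S ->
  #|[set x in E | P x a]| * #|S| = #|E| * c.
Proof.
move=> cardE Sa; have := sum_card_incidence E S P.
rewrite (eq_bigr _ cardE) (eq_bigr (fun=> #|[set x in E | P x a]|)).
  by rewrite !sum_nat_const mulnC.
by move=> b Sb; apply/eqP; rewrite eqn_leq !card_incidence_le.
Qed.

End TransitiveDoubleCounting.

Section PointwiseStabiliser.

Variables (gT : finGroupType) (sT : finType) (to : {action gT &-> sT}).
Variables (G : {group gT}) (S Delta : {set sT}) (t : nat).
Hypotheses (sDeltaS : Delta \subset S) (trG : ntransitive t G S to).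

Lemma astab_dtuple_transP2 k : #|Delta| + k <= t ->
  {in k.-dtuple(S :\: Delta) &, forall a b,
     exists2 h, h \in ('C_G(Delta | to))%g & b = n_act to a h}.
Proof.
(* Prefix both tuples with an enumeration of Delta. *)
move=> le_t a b Da Db; pose s := in_tuple (enum Delta).
have trGs : ntransitive (size s + k) G S to.
  by apply: ntransitive_weak trG; rewrite /= -cardE.
have cat_dtuple c : c \in k.-dtuple(S :\: Delta) ->
    cat_tuple s c \in (size s + k).-dtuple(S).
  rewrite !inE cat_uniq enum_uniq => /andP[uc sc] /=; rewrite uc andbT.
  apply/andP; split.
    by apply/hasPn => x /(subsetP sc); rewrite !inE mem_enum => /andP[].
  apply/subsetP => x; rewrite mem_cat mem_enum => /orP[/(subsetP sDeltaS) //|].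
  by move/(subsetP sc); rewrite inE => /andP[].
have [h Gh] := atransP2 trGs (cat_dtuple a Da) (cat_dtuple b Db).
move/(congr1 val); rewrite /= map_cat => /eqP.
rewrite eqseq_cat ?size_map // => /andP[/eqP fix_s /eqP b_a].
exists h; last exact: val_inj.
rewrite inE Gh; apply/astabP => x Dx.
suff /eq_in_map fix_enum : map (to^~ h) (enum Delta) = map id (enum Delta).
  by rewrite fix_enum ?mem_enum.
by rewrite map_id -fix_s.
Qed.

Lemma astab_transP2 : #|Delta| < t ->
  {in S :\: Delta &, forall a b,
     exists2 h, h \in ('C_G(Delta | to))%g & b = to a h}.
Proof.
move=> lt_t a b Da Db.
have dtuple1 c : c \in S :\: Delta -> [tuple c] \in 1.-dtuple(S :\: Delta).
  by rewrite dtuple_on_add !inE memtE subset_all andbT.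
have le1 : #|Delta| + 1 <= t by rewrite addn1.
have [h Hh [->]] := astab_dtuple_transP2 le1 (dtuple1 a Da) (dtuple1 b Db).
by exists h.
Qed.

End PointwiseStabiliser.

Section Dtuples.

Variable T : finType.

Lemma card_dtuple n (S : {set T}) : #|n.-dtuple(S)| = #|S| ^_ n.
Proof.
rewrite -card_uniq_tuples; apply: eq_card => a.
by rewrite !inE subset_all andbC.
Qed.

Lemma mem_dtuple2 (S : {set T}) a b :
  ([tuple a; b] \in 2.-dtuple(S)) = [&& a \in S, b \in S & a != b].
Proof. by rewrite !inE memtE subset_all /= !inE !andbT andbC -andbA. Qed.

Lemma card_dtuple2_pred (S : {set T}) (Q : T -> T -> bool) :
  #|[set a in 2.-dtuple(S) | Q (tnth a ord0) (tnth a ord_max)]|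
    = #|[set p : T * T | [&& p.1 \in S, p.2 \in S, p.1 != p.2 & Q p.1 p.2]]|.
Proof.
pose pair_tuple (p : T * T) := [tuple p.1; p.2].
have pair_tuple_inj : injective pair_tuple.
  by move=> [a0 a1] [b0 b1] /(congr1 val) [-> ->].
rewrite -(card_imset _ pair_tuple_inj); apply: eq_card => a.
case/tupleP: a => a0 a; case/tupleP: a => a1 a; rewrite tuple0.
rewrite (mem_imset _ (a0, a1) pair_tuple_inj).
by rewrite [LHS]inE mem_dtuple2 inE -!andbA.
Qed.

End Dtuples.

Section SupportCounts.

Variables (T : finType) (x : {perm T}).

Lemma fixpE : fixp x = ~: supp x.
Proof. by apply/setP => a; rewrite !inE negbK. Qed.

Lemma supp_permV : supp (x^-1)%g = supp x.
Proof.
by apply/setP => a; rewrite !inE -(inj_eq (@perm_inj _ x)) permKV eq_sym.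
Qed.

Lemma eq_permV a b : (x a == b) = (a == (x^-1)%g b).
Proof. by rewrite -[in RHS](inj_eq (@perm_inj _ x)) permKV. Qed.

Lemma card_fixp : #|fixp x| = #|T| - #|supp x|.
Proof. by rewrite fixpE cardsCs setCK. Qed.

Variable Delta : {set T}.
Hypothesis sDelta_supp : Delta \subset supp x.

Lemma fixp_notin a : a \in fixp x -> a \notin Delta.
Proof. by rewrite fixpE inE; apply: contra => /(subsetP sDelta_supp). Qed.

Lemma card_fixp_notin :
  #|[set a in ~: Delta | x a == a]| = #|T| - #|supp x|.
Proof.
rewrite -card_fixp; apply: eq_card => a; rewrite !inE andbC.
by apply: andb_idr => xa; apply: fixp_notin; rewrite inE.
Qed.

Lemma card_supp_diff : #|supp x :\: Delta| = #|supp x| - #|Delta|.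
Proof. by rewrite cardsD (setIidPr sDelta_supp). Qed.

Lemma card_supp_notin :
  #|[set a in ~: Delta | x a != a]| = #|supp x| - #|Delta|.
Proof.
rewrite -card_supp_diff; apply: eq_card => a.
by rewrite !inE andbC.
Qed.

Lemma card_fixp_supp_notin :
  #|[set a in 2.-dtuple(~: Delta)
       | (tnth a ord0 \in fixp x) && (tnth a ord_max \in supp x)]|
    = (#|T| - #|supp x|) * (#|supp x| - #|Delta|).
Proof.
rewrite (card_dtuple2_pred _ (fun a b => (a \in fixp x) && (b \in supp x))).
rewrite -card_fixp -card_supp_diff -cardsX.
apply: eq_card => -[a b]; rewrite !inE /=.
apply/and5P/and3P => [[_ -> _ -> ->] // | [xa -> xb]]; split=> //.
  by apply: fixp_notin; rewrite inE.
by apply: contraNneq xb => <-.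
Qed.

Variable alpha : T.
Hypothesis alpha_supp : alpha \in supp x.

Lemma permV_neq : (x^-1)%g alpha != alpha.
Proof. by move: alpha_supp; rewrite -supp_permV inE. Qed.

Lemma card_preim_supp1 :
  #|[set a in ~: [set alpha] | x a \in [set alpha]]| = 1.
Proof.
rewrite -(cards1 ((x^-1)%g alpha)); apply: eq_card => a; rewrite !inE eq_permV.
by apply: andb_idl => /eqP->; apply: permV_neq.
Qed.

Lemma card_graph_supp1 :
  #|[set a in 2.-dtuple(~: [set alpha]) | x (tnth a ord0) == tnth a ord_max]|
    = #|supp x| - 2.
Proof.
have graph_inj : injective (fun a => (a, x a)) by move=> a b [].
have supp_alphaV : (x^-1)%g alpha \in supp x :\ alpha.
  by rewrite !inE permV_neq permKV eq_sym permV_neq.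
rewrite (card_dtuple2_pred _ (fun a b => x a == b)).
rewrite (cardsD1 alpha (supp x)) alpha_supp (cardsD1 ((x^-1)%g alpha)).
rewrite supp_alphaV add1n addSn subSS subn1 /=.
rewrite -(card_imset _ graph_inj); apply: eq_card => -[a b]; rewrite !inE /=.
have [<- | xab] := eqVneq (x a) b; last first.
  rewrite !andbF; apply/esym/negbTE/imsetP => -[c _ [aE bE]].
  by rewrite aE bE eqxx in xab.
rewrite (mem_imset _ a graph_inj) !inE eq_permV andbT.
by rewrite [a == x a]eq_sym; do !bool_congr.
Qed.

End SupportCounts.

Lemma mem_supp_conjg (T : finType) (x g : {perm T}) a :
  (g a \in supp (x ^ g)%g) = (a \in supp x).
Proof. by rewrite !inE permJ (inj_eq perm_inj). Qed.

Lemma mem_fixp_conjg (T : finType) (x g : {perm T}) a :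
  (g a \in fixp (x ^ g)%g) = (a \in fixp x).
Proof. by rewrite !inE permJ (inj_eq perm_inj). Qed.

Lemma card_supp_conjg (T : finType) (x g : {perm T}) :
  #|supp (x ^ g)%g| = #|supp x|.
Proof.
rewrite -(card_imset (supp x) (@perm_inj _ g)); apply: eq_card => b.
by rewrite -[b](permKV g) mem_supp_conjg (mem_imset _ _ perm_inj).
Qed.

Lemma natr_ratio_eq (R : numFieldType) (N e a b : nat) :
  0 < b -> N * b = e * a -> (N%:R = e%:R * (a%:R / b%:R) :> R)%R.
Proof.
move=> b_gt0 eq_Nb; rewrite mulrA; apply: (canRL (mulfK _)).
  by rewrite pnatr_eq0 -lt0n.
by rewrite -!natrM eq_Nb.
Qed.

Section ConjugatesUnderPointwiseStabiliser.

Variables (T : finType) (G : {group {perm T}}) (t : nat).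
Variables (u : {perm T}) (Delta : {set T}) (R : numFieldType).
Hypothesis trG : ntransitive t G [set: T] 'P.
Hypothesis sDelta_supp : Delta \subset supp u.

Local Notation H := ('C_G(Delta | 'P))%g.
Local Notation E := [set (u ^ g)%g | g in H].

Lemma astab_fix h a : h \in H -> a \in Delta -> h a = a.
Proof. by rewrite inE => /andP[_ /astabP fixDelta] /fixDelta. Qed.

Lemma sub_supp_E x : x \in E -> Delta \subset supp x.
Proof.
case/imsetP=> g Hg ->; apply/subsetP => a Da.
by rewrite -(astab_fix Hg Da) mem_supp_conjg (subsetP sDelta_supp).
Qed.

Lemma card_E_incidence (Y : finType) (toY : {action {perm T} &-> Y})
    (S : {set Y}) (P : {perm T} -> Y -> bool) c a :
    {in S &, forall a b, exists2 h, h \in H & b = toY a h} ->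
    (forall x a h, h \in H -> P x a -> P (x ^ h)%g (toY a h)) ->
    (forall x, Delta \subset supp x -> #|supp x| = #|supp u| ->
       #|[set b in S | P x b]| = c) ->
    a \in S ->
  (#|[set x in E | P x a]|%:R = #|E|%:R * (c%:R / #|S|%:R) :> R)%R.
Proof.
move=> transS P_act cardP Sa.
apply: natr_ratio_eq; first by apply/card_gt0P; exists a.
(* E is convertible to orbit 'J H u. *)
have actsE : [acts H, on E | 'J] := acts_orbit _ _ (subsetT H).
apply: (card_incidence_transitive actsE P_act transS _ Sa) => x xE.
rewrite cardP ?sub_supp_E //.
by case/imsetP: xE => g _ ->; apply: card_supp_conjg.
Qed.

Lemma astab_setC_transP2 : #|Delta| < t ->
  {in ~: Delta &, forall a b, exists2 h, h \in H & b = 'P%act a h}.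
Proof. by rewrite -setTD; exact: (astab_transP2 (subsetT Delta) trG). Qed.

Lemma astab_dtuple2_transP2 : #|Delta| + 2 <= t ->
  {in 2.-dtuple(~: Delta) &,
     forall a b, exists2 h, h \in H & b = n_act 'P a h}.
Proof.
by rewrite -setTD; exact: (astab_dtuple_transP2 (subsetT Delta) trG).
Qed.

Lemma card_setC_Delta : #|~: Delta| = #|T| - #|Delta|.
Proof. by rewrite cardsCs setCK. Qed.

Lemma card_dtuple2_setC :
  #|2.-dtuple(~: Delta)| = (#|T| - #|Delta|) * (#|T| - #|Delta| - 1).
Proof. by rewrite card_dtuple ffactnSr ffactn1 card_setC_Delta. Qed.

Lemma card_E_fix gamma : #|Delta| < t -> gamma \notin Delta ->
  (#|[set x in E | x gamma == gamma]|%:R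
     = #|E|%:R * ((#|T| - #|supp u|)%:R / (#|T| - #|Delta|)%:R) :> R)%R.
Proof.
move=> lt_t gD; rewrite -card_setC_Delta.
apply: (card_E_incidence (P := fun x a => x a == a)) (astab_setC_transP2 lt_t)
  _ _ _; last by rewrite inE.
  by move=> x a h _ /eqP xa; rewrite /= permJ xa.
by move=> x sDx <-; apply: card_fixp_notin.
Qed.

Lemma card_E_supp gamma : #|Delta| < t -> gamma \notin Delta ->
  (#|[set x in E | x gamma != gamma]|%:R
     = #|E|%:R * ((#|supp u| - #|Delta|)%:R / (#|T| - #|Delta|)%:R) :> R)%R.
Proof.
move=> lt_t gD; rewrite -card_setC_Delta.
apply: (card_E_incidence (P := fun x a => x a != a)) (astab_setC_transP2 lt_t)
  _ _ _; last by rewrite inE.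
  by move=> x a h _; rewrite /= permJ (inj_eq perm_inj).
by move=> x sDx <-; apply: card_supp_notin.
Qed.

Lemma card_E_fixp_supp gamma delta : #|Delta| + 2 <= t ->
    gamma \notin Delta -> delta \notin Delta -> gamma != delta ->
  (#|[set x in E | (gamma \in fixp x) && (delta \in supp x)]|%:R
     = #|E|%:R * (((#|T| - #|supp u|)%:R * (#|supp u| - #|Delta|)%:R)
                  / ((#|T| - #|Delta|)%:R * (#|T| - #|Delta| - 1)%:R)) :> R)%R.
Proof.
move=> le_t gD dD gd; rewrite -!natrM -card_dtuple2_setC.
pose P x (a : 2.-tuple T) :=
  (tnth a ord0 \in fixp x) && (tnth a ord_max \in supp x).
apply: (card_E_incidence (P := P) (a := [tuple gamma; delta]))
  (astab_dtuple2_transP2 le_t) _ _ _.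
- by move=> x a h _; rewrite /P !tnth_map /= mem_fixp_conjg mem_supp_conjg.
- by move=> x sDx <-; apply: card_fixp_supp_notin.
by rewrite mem_dtuple2 !inE gD dD gd.
Qed.

Lemma card_E_to_Delta gamma : #|Delta| = 1 -> 1 < t -> gamma \notin Delta ->
  (#|[set x in E | x gamma \in Delta]|%:R
     = #|E|%:R * (1 / (#|T| - 1)%:R) :> R)%R.
Proof.
move=> d1 lt_t gD.
have /cards1P[alpha Dalpha] : #|Delta| == 1 := introT eqP d1.
rewrite -d1 -card_setC_Delta -[1%R]/(1%:R)%R.
apply: (card_E_incidence (P := fun x a => x a \in Delta))
  (astab_setC_transP2 _) _ _ _.
- by rewrite d1.
- by move=> x a h Hh xa; rewrite /= permJ astab_fix.
- move=> x; rewrite Dalpha sub1set => alpha_supp _.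
  exact: card_preim_supp1.
by rewrite inE.
Qed.

Lemma card_E_maps_to gamma delta : #|Delta| = 1 -> 2 < t ->
    gamma \notin Delta -> delta \notin Delta -> gamma != delta ->
  (#|[set x in E | x gamma == delta]|%:R
     = #|E|%:R * ((#|supp u| - 2)%:R / ((#|T| - 1)%:R * (#|T| - 2)%:R))
     :> R)%R.
Proof.
move=> d1 lt_t gD dD gd.
have /cards1P[alpha Dalpha] : #|Delta| == 1 := introT eqP d1.
have -> : ((#|T| - 1)%:R * (#|T| - 2)%:R = #|2.-dtuple(~: Delta)|%:R :> R)%R.
  by rewrite -natrM card_dtuple2_setC d1 -subnDA.
pose P x (a : 2.-tuple T) := x (tnth a ord0) == tnth a ord_max.
apply: (card_E_incidence (P := P) (a := [tuple gamma; delta]))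
  (astab_dtuple2_transP2 _) _ _ _.
- by rewrite d1.
- by move=> x a h _ /eqP xa; rewrite /P !tnth_map /= permJ xa.
- move=> x; rewrite Dalpha sub1set => alpha_supp <-.
  exact: card_graph_supp1.
by rewrite mem_dtuple2 !inE gD dD gd.
Qed.

End ConjugatesUnderPointwiseStabiliser.

Local Open Scope ring_scope.

Theorem lemma2p5 (T : finType) (G : {group {perm T}}) (t : nat)
    (u : {perm T}) (Delta : {set T}) :
  (2 <= t)%N ->
  ntransitive t G [set: T] 'P ->
  u \in G ->
  Delta \subset supp u ->
  let n := #|T| in
  let m := #|supp u| in
  let d := #|Delta| in
  let E := [set (u ^ g)%g | g in ('C_G(Delta | 'P))%g] in
  ((d <= t - 1)%N ->
     forall gamma, gamma \notin Delta ->
       (#|[set x in E | x gamma == gamma]|%:R : rat)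
         = #|E|%:R * ((n - m)%:R / (n - d)%:R)
       /\ (#|[set x in E | x gamma != gamma]|%:R : rat)
         = #|E|%:R * ((m - d)%:R / (n - d)%:R))
  /\ ((d <= t - 2)%N ->
     forall gamma delta, gamma \notin Delta -> delta \notin Delta ->
       gamma != delta ->
       (#|[set x in E | (gamma \in fixp x) && (delta \in supp x)]|%:R : rat)
         = #|E|%:R * (((n - m)%:R * (m - d)%:R)
                      / ((n - d)%:R * (n - d - 1)%:R)))
  /\ (d = 1%N ->
     forall gamma, gamma \notin Delta ->
       (#|[set x in E | x gamma \in Delta]|%:R : rat)
         = #|E|%:R * (1 / (n - 1)%:R))
  /\ (d = 1%N -> (3 <= t)%N ->
     forall gamma delta, gamma \notin Delta -> delta \notin Delta ->
       gamma != delta ->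
       (#|[set x in E | x gamma == delta]|%:R : rat)
         = #|E|%:R * ((m - 2)%:R / ((n - 1)%:R * (n - 2)%:R))).
Proof.
move=> le2t trG _ sDelta_supp n m d E.
split; [|split; [|split]].
- move=> le_d gamma gD; have lt_d : (d < t)%N by lia.
  by split; [apply: (card_E_fix _ trG) | apply: (card_E_supp _ trG)].
- move=> le_d gamma delta gD dD gd.
  by apply: (card_E_fixp_supp _ trG) => //; lia.
- by move=> d1 gamma gD; apply: (card_E_to_Delta _ trG).
by move=> d1 lt2t gamma delta gD dD gd; apply: (card_E_maps_to _ trG).
Qed.
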